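(* Assume all $\lambda_k>0$ and $\mu_k>0$, and let $\bar X=(\bar X_{i,k})$ have the stationary distribution of the two-layer loss system with parameters $(m,n,\lambda,\mu)$. Then for each class $k$: $\mathrm{Erl}(m_k,\lambda_k/\mu_k)\le_{\mathrm{st}}\bar X_{1,k}+\bar X_{2,k}\le_{\mathrm{st}}\mathrm{Erl}(m_k+n,\lambda_k/\mu_k)$. Consequently, with $a_k=\mathbb{E}(\bar X_{1,k}+\bar X_{2,k})$, $\theta_k=\mu_k a_k$ and $b_k=P(\bar X\in B_k)$: $a_{\mathrm{Erl}}(m_k,\lambda_k/\mu_k)\le a_k\le a_{\mathrm{Erl}}(m_k+n,\lambda_k/\mu_k)$, $\mu_k a_{\mathrm{Erl}}(m_k,\lambda_k/\mu_k)\le\theta_k\le\mu_k a_{\mathrm{Erl}}(m_k+n,\lambda_k/\mu_k)$, $b_{\mathrm{Erl}}(m_k+n,\lambda_k/\mu_k)\le b_k\le b_{\mathrm{Erl}}(m_k,\lambda_k/\mu_k)$.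
   Context: Two-layer loss system with parameters $(m,n,\lambda,\mu)$: Markov process on $S=\{x\in\mathbb{Z}_+^K\times\mathbb{Z}_+^K:x_{1,k}\le m_k\ \forall k,\ \sum_kx_{2,k}\le n\}$ ($x_{i,k}$ = number of class-$k$ customers at layer $i$) with transitions $x\mapsto x+e_{1,k}$ at rate $\lambda_k1(x_{1,k}<m_k)$, $x\mapsto x+e_{2,k}$ at rate $\lambda_k1(x_{1,k}=m_k,\sum_lx_{2,l}<n)$, $x\mapsto x-e_{i,k}$ at rate $\mu_kx_{i,k}$. $B_k=\{x\in S:x_{1,k}=m_k,\ \sum_lx_{2,l}=n\}$ is the set of states where class-$k$ arrivals are rejected, so $b_k$ is the class-$k$ blocking probability and $\theta_k$ the mean class-$k$ throughput (satisfying $\lambda_k(1-b_k)=\theta_k$). $\mathrm{Erl}(s,\rho)$ denotes a random variable on $\{0,\dots,s\}$ with $P(\mathrm{Erl}(s,\rho)=i)=\frac{\rho^i/i!}{\sum_{j=0}^s\rho^j/j!}$; $a_{\mathrm{Erl}}(s,\rho)$ is its mean and $b_{\mathrm{Erl}}(s,\rho)=P(\mathrm{Erl}(s,\rho)=s)$ (Erlang B formula). $\le_{\mathrm{st}}$ between real random variables is the usual stochastic order. *)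

From HB Require Import structures.
From mathcomp Require Import all_boot all_order all_algebra.
Set Implicit Arguments. Unset Strict Implicit. Unset Printing Implicit Defensive.
Import Order.TTheory GRing.Theory Num.Theory.

(* Uniform bound on every coordinate of a state of S: x_{1,k} <= m_k <= max m,
   x_{2,k} <= n. *)
Definition bnd (K : nat) (m : 'I_K -> nat) (n : nat) : nat :=
  (\max_(k < K) m k + n).+1.

(* Carrier type containing S; states are pairs (layer 1, layer 2). *)
Notation state K m n :=
  ({ffun 'I_K -> 'I_(bnd m n)} * {ffun 'I_K -> 'I_(bnd m n)})%type.

Section Model.
Variables (K : nat) (m : 'I_K -> nat) (n : nat).

Definition x1 (x : state K m n) (k : 'I_K) : nat := x.1 k.
Definition x2 (x : state K m n) (k : 'I_K) : nat := x.2 k.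
Definition tot2 (x : state K m n) : nat := \sum_(l < K) x2 x l.

Definition inS (x : state K m n) : bool :=
  [forall k, x1 x k <= m k] && (tot2 x <= n).

Definition is_up1 (k : 'I_K) (x y : state K m n) : bool :=
  [forall j, x1 y j == x1 x j + (j == k)] && [forall j, x2 y j == x2 x j].
Definition is_up2 (k : 'I_K) (x y : state K m n) : bool :=
  [forall j, x1 y j == x1 x j] && [forall j, x2 y j == x2 x j + (j == k)].
Definition is_dn1 (k : 'I_K) (x y : state K m n) : bool :=
  [forall j, x1 y j + (j == k) == x1 x j] && [forall j, x2 y j == x2 x j].
Definition is_dn2 (k : 'I_K) (x y : state K m n) : bool :=
  [forall j, x1 y j == x1 x j] && [forall j, x2 y j + (j == k) == x2 x j].

Variable R : realFieldType.
Local Open Scope ring_scope.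
Variables (lam mu : 'I_K -> R).

Definition rate (x y : state K m n) : R :=
  \sum_(k < K)
    (  lam k *+ [&& is_up1 k x y & (x1 x k < m k)%N]
     + lam k *+ [&& is_up2 k x y, x1 x k == m k & (tot2 x < n)%N]
     + mu k *+ (x1 x k * is_dn1 k x y)
     + mu k *+ (x2 x k * is_dn2 k x y)).

Definition is_stationary (pi : state K m n -> R) : Prop :=
  [/\ forall x, inS x -> 0 <= pi x,
      \sum_(x | inS x) pi x = 1
    & forall y, inS y ->
        \sum_(x | inS x) pi x * rate x y = pi y * \sum_(z | inS z) rate y z].

Definition sum_ccdf (pi : state K m n -> R) (k : 'I_K) (t : R) : R :=
  \sum_(x | inS x && (t < (x1 x k + x2 x k)%:R)) pi x.
Definition mean_sum (pi : state K m n -> R) (k : 'I_K) : R :=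
  \sum_(x | inS x) pi x * (x1 x k + x2 x k)%:R.
Definition block_prob (pi : state K m n -> R) (k : 'I_K) : R :=
  \sum_(x | inS x && (x1 x k == m k) && (tot2 x == n)) pi x.
End Model.

Section Erlang.
Variable R : realFieldType.
Local Open Scope ring_scope.

Definition erl_w (rho : R) (i : nat) : R := rho ^+ i / (i`!)%:R.
Definition erl_norm (s : nat) (rho : R) : R := \sum_(j < s.+1) erl_w rho j.
Definition erl_pmf (s : nat) (rho : R) (i : nat) : R :=
  if (i <= s)%N then erl_w rho i / erl_norm s rho else 0.
Definition erl_ccdf (s : nat) (rho : R) (t : R) : R :=
  \sum_(i < s.+1 | t < i%:R) erl_pmf s rho i.
Definition a_erl (s : nat) (rho : R) : R :=
  \sum_(i < s.+1) i%:R * erl_pmf s rho i.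
Definition b_erl (s : nat) (rho : R) : R := erl_pmf s rho s.

(* usual stochastic order, expressed on survival functions t |-> P(X > t) *)
Definition st_le (F G : R -> R) : Prop := forall t : R, F t <= G t.
End Erlang.

From HB Require Import structures.
From mathcomp Require Import all_boot all_order all_algebra.
From mathcomp Require Import ring.
Set Implicit Arguments. Unset Strict Implicit. Unset Printing Implicit Defensive.
Import Order.TTheory GRing.Theory Num.Theory.

(* Fix a class k and let N_k = X_{1,k} + X_{2,k}.  Under the stationary law pi,
   N_k behaves like a birth-death count on {0, ..., m_k + n}: it goes up at rate
   lam_k except on B_k and down at rate mu_k N_k.  Testing the global balance
   equations against functions of N_k only (generator_count, balance_count_pmf)
   yields, for p_j = P(N_k = j) and q_j = P(N_k = j, X in B_k), the cut
   equations  mu (j+1) p_{j+1} = lam (p_j - q_j).  With the Erlang weights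
   w_j = rho^j / j!, this says that p_j / w_j decreases by q_j / w_j at each
   step; since q_j = 0 below m_k, p is proportional to w on {0, ..., m_k}.
   Hence Erl(m_k, rho) <=_lr p <=_lr Erl(m_k + n, rho) (likelihood-ratio
   order), which gives the stochastic and mean bounds; the blocking bounds
   follow from the throughput identity lam (1 - P(B_k)) = mu E N_k and its
   Erlang analogue a_Erl = rho (1 - b_Erl). *)

Local Open Scope ring_scope.

(* [lr_le M P Q]: on {0,...,M}, P is below Q in the likelihood-ratio order,
   written multiplicatively so that zero masses are allowed. *)
Definition lr_le (R : realFieldType) (M : nat) (P Q : nat -> R) : Prop :=
  forall i j, (i < j <= M)%N -> P j * Q i <= P i * Q j.

Lemma lr_le_mean (R : realFieldType) (M : nat) (P Q g : nat -> R) :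
  \sum_(i < M.+1) P i = 1 -> \sum_(i < M.+1) Q i = 1 -> lr_le M P Q ->
  (forall i j, (i <= j)%N -> g i <= g j) ->
  \sum_(i < M.+1) P i * g i <= \sum_(i < M.+1) Q i * g i.
Proof.
move=> sP sQ hPQ hg.
pose D := \sum_(i < M.+1) \sum_(j < M.+1) P i * Q j * (g j - g i).
have eD : \sum_(i < M.+1) Q i * g i - \sum_(i < M.+1) P i * g i = D.
  rewrite /D -[X in X - _]mul1r -sP mulr_suml -sumrB; apply: eq_bigr => i _.
  rewrite mulr_sumr -[P i * g i]mulr1 -sQ mulr_sumr -sumrB.
  by apply: eq_bigr => j _; rewrite mulrBr !mulrA [P i * g i * Q j]mulrAC.
(* Symmetrising D gives a sum of products of two factors of equal sign. *)
have D2_ge0 : 0 <= D + D.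
  rewrite {2}/D exchange_big -big_split /=; apply: sumr_ge0 => i _.
  rewrite -big_split /=; apply: sumr_ge0 => j _.
  have -> : P i * Q j * (g j - g i) + P j * Q i * (g i - g j)
      = (P i * Q j - P j * Q i) * (g j - g i).
    by rewrite mulrBl -[g i - g j]opprB mulrN.
  case: (ltngtP i j) => hij.
  - apply: mulr_ge0; rewrite subr_ge0; last exact/hg/ltnW.
    by rewrite hPQ // hij leq_ord.
  - apply: mulr_le0; rewrite subr_le0; last exact/hg/ltnW.
    by rewrite hPQ // hij leq_ord.
  - by rewrite hij subrr mul0r.
by rewrite -subr_ge0 eD; rewrite -mulr2n pmulrn_lge0 in D2_ge0.
Qed.

(* Survival probabilities P(X > t) are expectations of the nondecreasing
   indicator i |-> 1(t < i). *)
Lemma gt_indicator_mono (R : realFieldType) (t : R) (i j : nat) : (i <= j)%N ->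
  ((t < i%:R)%R)%:R <= ((t < j%:R)%R)%:R :> R.
Proof.
move=> hij; case: (boolP (t < i%:R)) => [lt|_]; last by case: (t < j%:R).
by rewrite (lt_le_trans lt) // ler_nat.
Qed.

Section ErlangDistribution.
Variables (R : realFieldType) (rho : R).
Hypothesis rho_gt0 : 0 < rho.

Lemma erl_w_gt0 i : 0 < erl_w rho i.
Proof. by rewrite /erl_w divr_gt0 // ?exprn_gt0 // ltr0n fact_gt0. Qed.

Lemma erl_norm_gt0 s : 0 < erl_norm s rho.
Proof.
rewrite /erl_norm big_ord_recl ltr_pwDl ?erl_w_gt0 //.
by apply: sumr_ge0 => i _; rewrite ltW ?erl_w_gt0.
Qed.

Lemma erl_wS j : erl_w rho j.+1 * j.+1%:R = rho * erl_w rho j.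
Proof.
rewrite /erl_w factS natrM invfM exprS -!mulrA; congr (_ * _).
by rewrite (mulrC ((j`!)%:R^-1)) mulKf // pnatr_eq0.
Qed.

Lemma erl_pmfE s i : (i <= s)%N -> erl_pmf s rho i = erl_w rho i / erl_norm s rho.
Proof. by rewrite /erl_pmf => ->. Qed.

Lemma erl_pmf_ge0 s i : 0 <= erl_pmf s rho i.
Proof.
rewrite /erl_pmf; case: ifP => // _.
by rewrite divr_ge0 // ltW ?erl_w_gt0 ?erl_norm_gt0.
Qed.

Lemma erl_sum1 s : \sum_(i < s.+1) erl_pmf s rho i = 1.
Proof.
under eq_bigr => i _ do rewrite (erl_pmfE (leq_ord i)).
by rewrite -mulr_suml mulfV // gt_eqF // erl_norm_gt0.
Qed.

(* Erl(s, rho) vanishes above s, so its sums may be taken over any larger range. *)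
Lemma erl_sum_widen s M (F : nat -> R) : (s <= M)%N ->
  \sum_(i < s.+1) erl_pmf s rho i * F i = \sum_(i < M.+1) erl_pmf s rho i * F i.
Proof.
move=> hs; rewrite (big_ord_widen M.+1 (fun i => erl_pmf s rho i * F i)) //.
rewrite big_mkcond /=; apply: eq_bigr => i _.
by rewrite /erl_pmf ltnS; case: (i <= s)%N; rewrite ?mul0r.
Qed.

Lemma erl_ccdf_sum s (t : R) :
  erl_ccdf s rho t = \sum_(i < s.+1) erl_pmf s rho i * ((t < i%:R)%R)%:R.
Proof.
rewrite /erl_ccdf big_mkcond /=.
by apply: eq_bigr => i _; case: ifP; rewrite ?mulr1 ?mulr0.
Qed.

Lemma a_erl_carried s : a_erl s rho = rho * (1 - b_erl s rho).
Proof.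
have Z_neq0 : erl_norm s rho != 0 by rewrite gt_eqF ?erl_norm_gt0.
rewrite /a_erl /b_erl erl_pmfE //.
under eq_bigr => i _ do rewrite (erl_pmfE (leq_ord i)) mulrA.
rewrite -mulr_suml big_ord_recl mul0r add0r.
under eq_bigr => i _ do rewrite lift0 mulrC erl_wS.
rewrite -mulr_sumr -mulrA; congr (_ * _).
apply: (mulIf Z_neq0); rewrite mulrBl mul1r divfK // -mulrA mulVf // mulr1.
by rewrite /erl_norm big_ord_recr /= addrK.
Qed.
End ErlangDistribution.

Lemma sum_pick (R : realFieldType) M (F : nat -> R) c : (c < M.+1)%N ->
  \sum_(i < M.+1) F i * (nat_of_ord i == c)%:R = F c.
Proof.
move=> hc; rewrite (bigD1 (Ordinal hc)) //= eqxx mulr1 big1 ?addr0 // => i hi.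
have [e|] := eqVneq (nat_of_ord i) c; last by rewrite mulr0.
by move: hi; rewrite (_ : i = Ordinal hc) ?eqxx //; apply: val_inj.
Qed.

(* Let p be the law on {0,...,M} of a count that moves up at rate lam unless
   blocked (q j being the mass of "count j and blocked", which vanishes below
   m0) and moves down at rate mu per unit.  Stationarity, tested against every
   function h of the count, is the hypothesis [balance]. *)
Section BlockedCount.
Variables (R : realFieldType) (lam mu : R) (m0 M : nat) (p q : nat -> R).
Hypotheses (lam_gt0 : 0 < lam) (mu_gt0 : 0 < mu) (m0_le_M : (m0 <= M)%N).
Hypothesis balance : forall h : nat -> R,
  lam * \sum_(j < M.+1) (p j - q j) * (h j.+1 - h j)
  + mu * \sum_(j < M.+1) p j * (j%:R * (h j.-1 - h j)) = 0.
Hypotheses (q_ge0 : forall j, 0 <= q j) (q_le_p : forall j, q j <= p j)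
  (q_below : forall j, (j < m0)%N -> q j = 0)
  (p_sum1 : \sum_(j < M.+1) p j = 1).

Local Notation rho := (lam / mu).
Local Notation w := (erl_w rho).

Lemma rho_gt0 : 0 < rho. Proof. by rewrite divr_gt0. Qed.

Lemma w_gt0 j : 0 < w j. Proof. exact: erl_w_gt0 rho_gt0 j. Qed.

Lemma w_neq0 j : w j != 0. Proof. by rewrite gt_eqF ?w_gt0. Qed.

Lemma p_ge0 j : 0 <= p j. Proof. exact: le_trans (q_ge0 j) (q_le_p j). Qed.

(* Flow across the cut between j and j+1 (test function 1(j < .)). *)
Lemma cut_balance j : (j < M)%N -> mu * j.+1%:R * p j.+1 = lam * (p j - q j).
Proof.
move=> hj; have := balance (fun i => (j < i)%N%:R).
have up i : (j < i.+1)%N%:R - (j < i)%N%:R = (i == j)%:R :> R.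
  rewrite ltnS leq_eqVlt eq_sym.
  by case: eqP => [->|_] /=; rewrite ?ltnn ?subr0 ?subrr.
have down i : i%:R * ((j < i.-1)%N%:R - (j < i)%N%:R)
    = - (j.+1%:R * (i == j.+1)%:R) :> R.
  case: i => [|i] /=; first by rewrite mul0r mulr0 oppr0.
  rewrite -opprB up eqSS mulrN; have [->|] := eqVneq i j => //= _.
  by rewrite !mulr0.
under eq_bigr do rewrite up.
under [X in _ + mu * X]eq_bigr do rewrite down mulrN mulrA.
rewrite (sum_pick (fun i => p i - q i)); last by rewrite ltnS ltnW.
rewrite sumrN.
rewrite (sum_pick (fun i => p i * j.+1%:R)) // mulrN.
by move/eqP; rewrite subr_eq0 => /eqP ->; rewrite [p _ * _]mulrC mulrA.
Qed.

(* Throughput identity (test function h = id): lam (1 - P(blocked)) = mu E N. *)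
Lemma throughput :
  lam * (1 - \sum_(j < M.+1) q j) = mu * \sum_(j < M.+1) p j * j%:R.
Proof.
have := balance (fun i => i%:R).
under eq_bigr do rewrite -natrB // subSnn mulr1.
have down i : i%:R * (i.-1%:R - i%:R) = - i%:R :> R.
  case: i => [|i] /=; first by rewrite mul0r oppr0.
  by rewrite -addn1 natrD; ring.
under [X in _ + mu * X]eq_bigr do rewrite down mulrN.
rewrite sumrN sumrB p_sum1 mulrN => /eqP; rewrite addr_eq0 => /eqP ->.
by rewrite opprK.
Qed.

Lemma ratio_step j : (j < M)%N -> p j.+1 / w j.+1 = p j / w j - q j / w j.
Proof.
move=> hj; have hj0 : 1 + j%:R != 0 :> R by rewrite addrC natr1 pnatr_eq0.
have hw : w j.+1 = rho * w j / j.+1%:R by rewrite -erl_wS mulfK ?pnatr_eq0.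
have hp : p j.+1 = lam * (p j - q j) / (mu * j.+1%:R).
  by rewrite -cut_balance // mulrC mulKf // mulf_neq0 ?gt_eqF ?pnatr_eq0.
by rewrite hp hw; field; rewrite w_neq0 hj0 !gt_eqF.
Qed.

Lemma ratio_noninc i j : (i <= j <= M)%N -> p j / w j <= p i / w i.
Proof.
elim: j => [|j IH] /andP [hij hj]; first by move: hij; rewrite leqn0 => /eqP ->.
rewrite leq_eqVlt in hij; case/orP: hij => [/eqP -> // | hij].
apply: le_trans (IH _); last by rewrite -ltnS hij ltnW.
by rewrite ratio_step // gerBl // divr_ge0 // ltW ?w_gt0.
Qed.

Lemma ratio_const j : (j <= m0)%N -> p j / w j = p 0 / w 0.
Proof.
elim: j => // j IH hj.
by rewrite ratio_step ?(leq_trans hj) // q_below // mul0r subr0 IH // ltnW.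
Qed.

(* Erl(m0, rho) <=_lr p: p is proportional to w on {0,...,m0}. *)
Lemma erl_lr_below : lr_le M (erl_pmf m0 rho) p.
Proof.
move=> i j /andP [hij _]; case: (leqP j m0) => hj; last first.
  by rewrite /erl_pmf leqNgt hj mul0r mulr_ge0 ?erl_pmf_ge0 ?p_ge0 ?rho_gt0.
have hi := ltnW (leq_trans hij hj).
rewrite !erl_pmfE // -[p i](divfK (w_neq0 i)) -[p j](divfK (w_neq0 j)).
by rewrite !ratio_const // le_eqVlt; apply/orP; left; apply/eqP; ring.
Qed.

(* p <=_lr Erl(M, rho): p / w is nonincreasing. *)
Lemma erl_lr_above : lr_le M p (erl_pmf M rho).
Proof.
move=> i j /andP [hij hjM]; have hiM := ltnW (leq_trans hij hjM).
rewrite !erl_pmfE // (mulrA (p j)) (mulrA (p i)).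
rewrite ler_pM2r ?invr_gt0 ?erl_norm_gt0 ?rho_gt0 //.
have pwE k l : p k * w l = p k / w k * (w k * w l) by rewrite mulrA divfK ?w_neq0.
rewrite (pwE j i) (pwE i j) [w j * w i]mulrC.
by rewrite ler_pM2r ?(mulr_gt0 (w_gt0 i) (w_gt0 j)) // ratio_noninc // (ltnW hij).
Qed.

Lemma count_mean_bounds (g : nat -> R) : (forall i j, (i <= j)%N -> g i <= g j) ->
  \sum_(i < m0.+1) erl_pmf m0 rho i * g i <= \sum_(i < M.+1) p i * g i
  <= \sum_(i < M.+1) erl_pmf M rho i * g i.
Proof.
move=> hg; rewrite (erl_sum_widen _ _ m0_le_M).
have erl_sum1_M : \sum_(i < M.+1) erl_pmf m0 rho i = 1.
  transitivity (\sum_(i < M.+1) erl_pmf m0 rho i * 1).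
    by apply: eq_bigr => i _; rewrite mulr1.
  rewrite -(erl_sum_widen rho (fun=> 1) m0_le_M).
  by under eq_bigr do rewrite mulr1; rewrite erl_sum1 ?rho_gt0.
by rewrite !lr_le_mean ?erl_sum1 ?rho_gt0 //; [apply: erl_lr_above | apply: erl_lr_below].
Qed.

Lemma count_a_bounds :
  a_erl m0 rho <= \sum_(i < M.+1) p i * i%:R <= a_erl M rho.
Proof.
rewrite /a_erl; under eq_bigr do rewrite mulrC.
under [X in _ <= _ <= X]eq_bigr do rewrite mulrC.
by apply: count_mean_bounds => i j; rewrite ler_nat.
Qed.

(* Blocking bounds, via the throughput identity and carried traffic. *)
Lemma count_b_bounds :
  b_erl M rho <= \sum_(j < M.+1) q j <= b_erl m0 rho.
Proof.
have b_erlE s : b_erl s rho = 1 - a_erl s rho / rho.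
  rewrite a_erl_carried ?rho_gt0 // mulrAC divff ?gt_eqF ?rho_gt0 //.
  by rewrite mul1r opprB addrC subrK.
have qE : \sum_(j < M.+1) q j = 1 - (\sum_(i < M.+1) p i * i%:R) / rho.
  have -> : \sum_(i < M.+1) p i * i%:R = lam * (1 - \sum_(j < M.+1) q j) / mu.
    by rewrite throughput mulrC mulKf ?gt_eqF.
  by field; rewrite !gt_eqF.
have hr : 0 < rho^-1 by rewrite invr_gt0 rho_gt0.
case/andP: count_a_bounds => ha1 ha2.
by rewrite qE !b_erlE !lerD2l !lerN2 !ler_pM2r // ha1 ha2.
Qed.
End BlockedCount.

Local Close Scope ring_scope.

Section ClassCount.
Variables (K : nat) (m : 'I_K -> nat) (n : nat) (k : 'I_K).
Local Notation S := (state K m n).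

Definition count (x : S) : nat := x1 x k + x2 x k.
Definition blocked (x : S) : bool := (x1 x k == m k) && (tot2 x == n).

Lemma x2_le_tot (x : S) j : (x2 x j <= tot2 x)%N.
Proof. by rewrite /tot2 (bigD1 j) //= leq_addr. Qed.

Lemma count_le (x : S) : inS x -> (count x <= m k + n)%N.
Proof.
case/andP=> /forallP h1 h2; rewrite /count leq_add //.
exact: leq_trans (x2_le_tot x k) h2.
Qed.

Lemma count_other_move k' (x y : S) : k' != k ->
  [|| is_up1 k' x y, is_up2 k' x y, is_dn1 k' x y | is_dn2 k' x y] ->
  count y = count x.
Proof.
move=> hk'; have hkk : (k == k') = false by rewrite eq_sym (negbTE hk').
by case/or4P=> /andP [/forallP h1 /forallP h2];
  move: (h1 k) (h2 k); rewrite hkk !addn0 /count => /eqP-> /eqP->.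
Qed.

Lemma arrival_modes (x : S) : inS x ->
  ((x1 x k < m k) + ((x1 x k == m k) && (tot2 x < n)) = ~~ blocked x)%N.
Proof.
case/andP => /forallP h1 h2; move: (h1 k); rewrite /blocked.
case: eqP => [-> _ | /eqP ne le] /=; first by rewrite ltnn ltn_neqAle h2 andbT.
by rewrite ltn_neqAle ne le.
Qed.

Definition mkstate (a b : 'I_K -> nat) : S :=
  ([ffun j => inord (a j)], [ffun j => inord (b j)]).

Lemma mkstate_spec (a b : 'I_K -> nat) :
  (forall j, a j <= m j)%N -> (\sum_(j < K) b j <= n)%N ->
  [/\ inS (mkstate a b), forall j, x1 (mkstate a b) j = a j
    & forall j, x2 (mkstate a b) j = b j].
Proof.
move=> ha hb.
have bnd_gt j : (m j + n < bnd m n)%N by rewrite /bnd ltnS leq_add2r (leq_bigmax j).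
have e1 j : x1 (mkstate a b) j = a j.
  by rewrite /x1 ffunE inordK // (leq_ltn_trans _ (bnd_gt j)) // (leq_trans (ha j) (leq_addr _ _)).
have e2 j : x2 (mkstate a b) j = b j.
  rewrite /x2 ffunE inordK // (leq_ltn_trans _ (bnd_gt j)) //.
  by apply: leq_trans (leq_addl _ _); apply: leq_trans hb; rewrite (bigD1 j) //= leq_addr.
split=> //; apply/andP; split; first by apply/forallP => j; rewrite e1.
by rewrite /tot2; under eq_bigr do rewrite e2.
Qed.

Lemma state_eq (y z : S) :
  (forall j, x1 y j = x1 z j) -> (forall j, x2 y j = x2 z j) -> y = z.
Proof.
case: y z => [y1 y2] [z1 z2] h1 h2.
by congr pair; apply/ffunP => j; apply: val_inj; [exact: h1 | exact: h2].
Qed.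

Lemma addn_eq_sub (u d v : nat) : (d <= v)%N -> (u + d == v) = (u == v - d).
Proof. by move=> hd; rewrite -{1}(subnK hd) eqn_add2r. Qed.

Local Open Scope ring_scope.
Variables (R : realFieldType) (lam mu : 'I_K -> R).

Lemma sum_single (T : finType) (P Q : pred T) (y0 : T) (F : T -> R) (c : R) :
  P y0 -> Q y0 -> (forall y, Q y -> y = y0) ->
  \sum_(y | P y) c *+ Q y * F y = c * F y0.
Proof.
move=> hP hQ hu; rewrite (bigD1 y0) //= hQ mulr1n big1 ?addr0 // => y /andP [_ hy].
case: (boolP (Q y)) => [/hu e | _]; last by rewrite mulr0n mul0r.
by rewrite e eqxx in hy.
Qed.

Lemma sum_move (Q : pred S) (a b : 'I_K -> nat) (c : R) (g : nat -> R) :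
  (forall j, a j <= m j)%N -> (\sum_(j < K) b j <= n)%N ->
  (forall y, Q y = [forall j, x1 y j == a j] && [forall j, x2 y j == b j]) ->
  \sum_(y | inS y) c *+ Q y * g (count y) = c * g (a k + b k)%N.
Proof.
move=> ha hb hQ; have [inS_ab e1 e2] := mkstate_spec ha hb.
rewrite (sum_single _ _ inS_ab) /count ?e1 ?e2 // => [|y].
  by rewrite hQ; apply/andP; split; apply/forallP => j; rewrite ?e1 ?e2.
by rewrite hQ => /andP [/forallP h1 /forallP h2]; apply: state_eq => j;
  rewrite ?e1 ?e2 (eqP (h1 j), eqP (h2 j)).
Qed.

Definition class_rate (k' : 'I_K) (x y : S) : R :=
    lam k' *+ [&& is_up1 k' x y & (x1 x k' < m k')%N]
  + lam k' *+ [&& is_up2 k' x y, x1 x k' == m k' & (tot2 x < n)%N]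
  + mu k' *+ (x1 x k' * is_dn1 k' x y)
  + mu k' *+ (x2 x k' * is_dn2 k' x y).

Lemma rate_classes (x y : S) : rate lam mu x y = \sum_(k' < K) class_rate k' x y.
Proof. by []. Qed.

Lemma class_rate_other k' (x y : S) (h : nat -> R) : k' != k ->
  class_rate k' x y * (h (count y) - h (count x)) = 0.
Proof.
move=> hk'.
case: (boolP [|| is_up1 k' x y, is_up2 k' x y, is_dn1 k' x y | is_dn2 k' x y]).
  by move/(count_other_move hk') ->; rewrite subrr mulr0.
rewrite /class_rate !negb_or => /and4P [/negbTE-> /negbTE-> /negbTE-> /negbTE->].
by rewrite /= !muln0 !mulr0n !addr0 mul0r.
Qed.

Section ClassKMoves.
Variables (x : S) (h : nat -> R).
Hypothesis x_in : inS x.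
Local Notation dh y := (h (count y) - h (count x)).

Lemma move_up1 :
  \sum_(y | inS y) lam k *+ [&& is_up1 k x y & (x1 x k < m k)%N] * dh y
  = lam k *+ (x1 x k < m k)%N * (h (count x).+1 - h (count x)).
Proof.
have [lt|_] := boolP (x1 x k < m k)%N; last first.
  by rewrite mulr0n mul0r big1 // => y _; rewrite andbF mulr0n mul0r.
case/andP: x_in => /forallP hm htot; under eq_bigr do rewrite andbT.
rewrite (sum_move (a := fun j => (x1 x j + (j == k))%N) (b := x2 x)
  _ (fun N => h N - h (count x))) //= ?eqxx ?addn1 //.
by move=> j; case: eqP => [->|_]; rewrite ?addn1 ?addn0.
Qed.

Lemma move_up2 :
  \sum_(y | inS y) lam k *+ [&& is_up2 k x y, x1 x k == m k & (tot2 x < n)%N] * dh y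
  = lam k *+ ((x1 x k == m k) && (tot2 x < n))%N * (h (count x).+1 - h (count x)).
Proof.
have [/andP [_ c2]|_] := boolP ((x1 x k == m k) && (tot2 x < n))%N; last first.
  by rewrite mulr0n mul0r big1 // => y _; rewrite andbF mulr0n mul0r.
case/andP: x_in => /forallP hm htot; under eq_bigr do rewrite andbT.
rewrite (sum_move (a := x1 x) (b := fun j => (x2 x j + (j == k))%N)
  _ (fun N => h N - h (count x))) //= ?eqxx ?addn1 ?addnS //.
by rewrite big_split /= -/(tot2 x) (bigD1 k) //= eqxx big1 ?addn1 // => j /negbTE->.
Qed.

Lemma move_dn1 :
  \sum_(y | inS y) mu k *+ (x1 x k * is_dn1 k x y) * dh y
  = mu k *+ x1 x k * (h (count x).-1 - h (count x)).
Proof.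
under eq_bigr do rewrite mulrnA.
have [->|pos] := posnP (x1 x k).
  by rewrite mulr0n mul0r big1 // => y _; rewrite mul0rn mul0r.
have le j : ((j == k) <= x1 x j)%N by case: eqP => [->|].
case/andP: x_in => /forallP hm htot.
rewrite (sum_move (a := fun j => (x1 x j - (j == k))%N) (b := x2 x)
  _ (fun N => h N - h (count x))) //= ?eqxx /count.
- by rewrite -!subn1 addnBAC.
- by move=> j; rewrite (leq_trans (leq_subr _ _)).
- by move=> y; congr andb; apply: eq_forallb => j; rewrite addn_eq_sub.
Qed.

Lemma move_dn2 :
  \sum_(y | inS y) mu k *+ (x2 x k * is_dn2 k x y) * dh y
  = mu k *+ x2 x k * (h (count x).-1 - h (count x)).
Proof.
under eq_bigr do rewrite mulrnA.
have [->|pos] := posnP (x2 x k).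
  by rewrite mulr0n mul0r big1 // => y _; rewrite mul0rn mul0r.
have le j : ((j == k) <= x2 x j)%N by case: eqP => [->|].
case/andP: x_in => /forallP hm htot.
rewrite (sum_move (a := x1 x) (b := fun j => (x2 x j - (j == k))%N)
  _ (fun N => h N - h (count x))) //= ?eqxx /count.
- by rewrite -!subn1 addnBA.
- by apply: leq_trans htot; apply: leq_sum => j _; apply: leq_subr.
- by move=> y; congr andb; apply: eq_forallb => j; rewrite addn_eq_sub.
Qed.
End ClassKMoves.

Lemma generator_count (x : S) (h : nat -> R) : inS x ->
  \sum_(y | inS y) rate lam mu x y * (h (count y) - h (count x))
  = lam k *+ ~~ blocked x * (h (count x).+1 - h (count x))
    + mu k *+ count x * (h (count x).-1 - h (count x)).
Proof.
move=> x_in; under eq_bigr do rewrite rate_classes mulr_suml.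
rewrite exchange_big (bigD1 k) //= [X in _ + X]big1 ?addr0; last first.
  by move=> k' hk'; apply: big1 => y _; apply: class_rate_other.
under eq_bigr do rewrite !mulrDl.
rewrite !big_split /= move_up1 // move_up2 // move_dn1 // move_dn2 //.
by rewrite -!mulrDl -!mulrnDr arrival_modes // -addrA -mulrDl -mulrnDr.
Qed.

Definition count_pmf (pi : S -> R) (j : nat) : R :=
  \sum_(x | inS x && (count x == j)) pi x.
Definition count_blocked (pi : S -> R) (j : nat) : R :=
  \sum_(x | inS x && (count x == j)) pi x * (blocked x)%:R.

Lemma sum_by_count (v : S -> R) (F : nat -> R) :
  \sum_(x | inS x) v x * F (count x)
  = \sum_(j < (m k + n).+1) (\sum_(x | inS x && (count x == j)) v x) * F j.
Proof.
rewrite (partition_big (fun x => inord (count x) : 'I_(m k + n).+1) predT) //=.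
apply: eq_bigr => j _; rewrite mulr_suml.
apply: eq_big => [x|x /andP [x_in /eqP <-]]; last by rewrite inordK // ltnS count_le.
by case x_in: (inS x) => //=; rewrite -val_eqE /= inordK // ltnS count_le.
Qed.

Lemma sum_ccdf_count (pi : S -> R) (t : R) :
  sum_ccdf pi k t = \sum_(j < (m k + n).+1) count_pmf pi j * ((t < j%:R)%R)%:R.
Proof.
rewrite /sum_ccdf big_mkcondr -(sum_by_count pi (fun j => ((t < j%:R)%R)%:R)).
by apply: eq_bigr => x _; rewrite /count; case: ifP; rewrite ?mulr1 ?mulr0.
Qed.

Lemma mean_sum_count (pi : S -> R) :
  mean_sum pi k = \sum_(j < (m k + n).+1) count_pmf pi j * j%:R.
Proof. by rewrite /mean_sum -(sum_by_count pi (fun j => j%:R)). Qed.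

Lemma block_prob_count (pi : S -> R) :
  block_prob pi k = \sum_(j < (m k + n).+1) count_blocked pi j.
Proof.
rewrite /block_prob (eq_bigl (fun x => inS x && blocked x)); last first.
  by move=> x; rewrite /blocked andbA.
rewrite big_mkcondr.
transitivity (\sum_(x | inS x) pi x * (blocked x)%:R * (fun=> 1) (count x)).
  by apply: eq_bigr => x _; case: (blocked x); rewrite /= ?mulr1 ?mulr0.
rewrite (sum_by_count (fun x => pi x * (blocked x)%:R) (fun=> 1)).
by apply: eq_bigr => j _; rewrite mulr1.
Qed.

(* B_k requires x_{1,k} = m_k, so it lies in {N_k >= m_k}. *)
Lemma count_blocked_below (pi : S -> R) j : (j < m k)%N -> count_blocked pi j = 0.
Proof.
move=> hj; apply: big1 => x /andP [_ /eqP cx].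
case b: (blocked x); last by rewrite mulr0.
by move: b hj => /andP [/eqP x1m _]; rewrite -cx /count x1m ltnNge leq_addr.
Qed.

Section StationaryCount.
Variable pi : S -> R.
Hypothesis pi_stat : is_stationary lam mu pi.

Lemma balance_count (h : nat -> R) :
  \sum_(x | inS x) pi x * (lam k *+ ~~ blocked x * (h (count x).+1 - h (count x))
     + mu k *+ count x * (h (count x).-1 - h (count x))) = 0.
Proof.
case: pi_stat => _ _ global_balance.
transitivity (\sum_(x | inS x) pi x *
   \sum_(y | inS y) rate lam mu x y * (h (count y) - h (count x))).
  by apply: eq_big => // x x_in; rewrite generator_count.
have split_flow x : pi x * \sum_(y | inS y) rate lam mu x y * (h (count y) - h (count x))
   = \sum_(y | inS y) pi x * rate lam mu x y * h (count y)
     - pi x * (\sum_(y | inS y) rate lam mu x y) * h (count x).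
  rewrite !mulr_sumr mulr_suml -sumrB.
  by apply: eq_bigr => y _; rewrite mulrA mulrBr.
rewrite (eq_bigr _ (fun x _ => split_flow x)) sumrB exchange_big /=.
apply/eqP; rewrite subr_eq0; apply/eqP; apply: eq_bigr => y y_in.
by rewrite -mulr_suml global_balance.
Qed.

Lemma balance_count_pmf (h : nat -> R) :
  lam k * \sum_(j < (m k + n).+1)
      (count_pmf pi j - count_blocked pi j) * (h j.+1 - h j)
  + mu k * \sum_(j < (m k + n).+1) count_pmf pi j * (j%:R * (h j.-1 - h j)) = 0.
Proof.
apply: (etrans _ (balance_count h)).
transitivity (lam k * \sum_(x | inS x) (pi x - pi x * (blocked x)%:R)
                 * (h (count x).+1 - h (count x))
    + mu k * \sum_(x | inS x) pi x * ((count x)%:R * (h (count x).-1 - h (count x)))).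
  rewrite (sum_by_count (fun x => pi x - pi x * (blocked x)%:R) (fun j => h j.+1 - h j)).
  rewrite (sum_by_count pi (fun j => j%:R * (h j.-1 - h j))).
  by congr (_ * _ + _ * _); apply: eq_bigr => j _; rewrite sumrB.
rewrite !mulr_sumr -big_split; apply: eq_bigr => x _.
by case: (blocked x) => /=; ring.
Qed.

Lemma count_blocked_ge0 j : 0 <= count_blocked pi j.
Proof.
case: pi_stat => pi_ge0 _ _.
by apply: sumr_ge0 => x /andP [x_in _]; rewrite mulr_ge0 ?pi_ge0.
Qed.

Lemma count_blocked_le j : count_blocked pi j <= count_pmf pi j.
Proof.
case: pi_stat => pi_ge0 _ _.
apply: ler_sum => x /andP [x_in _].
by case: (blocked x); rewrite ?mulr1 // mulr0 pi_ge0.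
Qed.

Lemma count_pmf_sum1 : \sum_(j < (m k + n).+1) count_pmf pi j = 1.
Proof.
case: pi_stat => _ pi_sum1 _.
rewrite -pi_sum1 -(eq_bigr _ (fun x _ => mulr1 (pi x))) (sum_by_count pi (fun=> 1)).
by apply: eq_bigr => j _; rewrite mulr1.
Qed.
End StationaryCount.
End ClassCount.

Local Open Scope ring_scope.

Theorem theorem7 (R : realFieldType) (K : nat) (m : 'I_K -> nat) (n : nat)
    (lam mu : 'I_K -> R) (pi : state K m n -> R) :
  (forall k, 0 < lam k) -> (forall k, 0 < mu k) ->
  is_stationary lam mu pi ->
  forall k : 'I_K,
    let rho := lam k / mu k in
    [/\ st_le (erl_ccdf (m k) rho) (sum_ccdf pi k)
        /\ st_le (sum_ccdf pi k) (erl_ccdf (m k + n) rho),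
        a_erl (m k) rho <= mean_sum pi k <= a_erl (m k + n) rho,
        mu k * a_erl (m k) rho <= mu k * mean_sum pi k
          <= mu k * a_erl (m k + n) rho
      & b_erl (m k + n) rho <= block_prob pi k <= b_erl (m k) rho].
Proof.
move=> lam_gt0 mu_gt0 pi_stat k rho.
have [[[[balance q_ge0] q_le_p] q_below] p_sum1] :=
  (balance_count_pmf k pi_stat, count_blocked_ge0 k pi_stat,
   count_blocked_le k pi_stat, count_blocked_below (k := k) pi,
   count_pmf_sum1 k pi_stat).
have mk_le := leq_addr n (m k).
have st := count_mean_bounds (lam_gt0 k) (mu_gt0 k) mk_le
             balance q_ge0 q_le_p q_below p_sum1.
have ab := count_a_bounds (lam_gt0 k) (mu_gt0 k) mk_le
             balance q_ge0 q_le_p q_below p_sum1.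
have bb := count_b_bounds (lam_gt0 k) (mu_gt0 k) mk_le
             balance q_ge0 q_le_p q_below p_sum1.
split.
- split=> t; rewrite erl_ccdf_sum sum_ccdf_count.
  + by case/andP: (st _ (gt_indicator_mono t)).
  + by case/andP: (st _ (gt_indicator_mono t)).
- by rewrite mean_sum_count.
- by rewrite !ler_pM2l // mean_sum_count.
- by rewrite block_prob_count.
Qed.
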